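(* Let $U\subset(0,1)^m$ be open and let $b:U\to\mathbb{R}$ be given by $b(x)=ax^\mu=a\prod_{i=1}^m x_i^{\mu_i}$ for some $a\in\mathbb{R}$ and $\mu\in\mathbb{R}^m$. If $b$ is bounded, then $b$ is weakly $(M,B,0)$-mild, where $M=\max(1,|\mu_1|,\ldots,|\mu_m|)$ and $B=\sup_{x\in U}|b(x)|$.
   Context: For $W\subset(0,1)^d$ open, $A,B>0$, $C\ge0$: $g:W\to\mathbb{R}$ is weakly $(A,B,C)$-mild if it is $C^\infty$ and $|g^{(\nu)}(x)|\le B^{C+1}A^{|\nu|}|\nu|!^{C+1}/x^\nu$ for all $x\in W$ and $\nu\in\mathbb{N}^d$, where $x^\nu=\prod x_i^{\nu_i}$, $|\nu|=\sum\nu_i$, and $g^{(\nu)}=\partial^{|\nu|}g/\partial x_1^{\nu_1}\cdots\partial x_d^{\nu_d}$. *)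

From HB Require Import structures.
From mathcomp Require Import all_boot all_order all_algebra.
From mathcomp Require Import all_classical all_reals all_analysis.
Set Implicit Arguments. Unset Strict Implicit. Unset Printing Implicit Defensive.
Import Order.TTheory GRing.Theory Num.Theory.
Import numFieldNormedType.Exports.
Local Open Scope classical_set_scope.
Local Open Scope ring_scope.

Section Defs.
Variable R : realType.

Definition ecoord (d : nat) (i : 'I_d) : 'rV[R]_d := delta_mx 0 i.

(* partial derivative d/dx_i (as a total function; meaningful where it exists) *)
Definition dpartial (d : nat) (i : 'I_d) (f : 'rV[R]_d -> R) : 'rV[R]_d -> R :=
  fun x => 'D_(ecoord i) f x.

Definition dpartials (d : nat) (s : seq 'I_d) (f : 'rV[R]_d -> R) : 'rV[R]_d -> R :=
  foldr (@dpartial d) f s.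

Definition smooth_on (d : nat) (W : set 'rV[R]_d) (f : 'rV[R]_d -> R) : Prop :=
  forall (s : seq 'I_d) (x : 'rV[R]_d), W x ->
    {for x, continuous (dpartials s f)} /\
    forall i : 'I_d, derivable (dpartials s f) x (ecoord i).

Definition mabs (d : nat) (nu : 'I_d -> nat) : nat := (\sum_(i < d) nu i)%N.

(* g^(nu) = d^|nu| g / dx_1^nu_1 ... dx_d^nu_d *)
Definition mderiv (d : nat) (nu : 'I_d -> nat) (f : 'rV[R]_d -> R) : 'rV[R]_d -> R :=
  dpartials (flatten [seq nseq (nu i) i | i <- enum 'I_d]) f.

Definition mpow (d : nat) (x : 'rV[R]_d) (nu : 'I_d -> nat) : R :=
  \prod_(i < d) (x 0 i) ^+ nu i.

(* weakly (A,B,C)-mild on W (the parameter constraints A,B>0, C>=0 are not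
   built in) *)
Definition weakly_mild (d : nat) (W : set 'rV[R]_d) (A B C : R)
    (g : 'rV[R]_d -> R) : Prop :=
  smooth_on W g /\
  forall (nu : 'I_d -> nat) (x : 'rV[R]_d), W x ->
    `| mderiv nu g x | <=
      B `^ (C + 1) * A ^+ mabs nu * ((mabs nu)`!)%:R `^ (C + 1) / mpow x nu.

Definition unit_cube (d : nat) : set 'rV[R]_d :=
  [set x | forall i : 'I_d, 0 < x 0 i < 1].

End Defs.

From HB Require Import structures.
From mathcomp Require Import all_boot all_order all_algebra.
From mathcomp Require Import all_classical all_reals all_analysis.
From mathcomp Require Import ring lra.
Import Order.TTheory GRing.Theory Num.Theory.
Import numFieldNormedType.Exports.
Local Open Scope classical_set_scope.
Local Open Scope ring_scope.

(* On the positive orthant every iterated partial derivative of c x^e is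
   again a monomial: differentiating in x_i multiplies the coefficient by the
   current exponent of x_i and lowers that exponent by one.  The k-th factor so
   produced has absolute value at most M + (k - 1) <= M k, so after |nu| steps
   the coefficient is at most |c| M^|nu| |nu|!, while the monomial has become
   x^e / x^nu.  Hence |b^(nu)(x)| <= |b(x)| M^|nu| |nu|! / x^nu, and
   |b(x)| <= B. *)

Section Monomial.
Context {R : realType} {m : nat}.
Implicit Types (c : R) (e : 'I_m -> R) (x : 'rV[R]_m) (s : seq 'I_m).

Lemma derive_along_line {V : normedModType R} (f : V -> R)
    (P : R -> R) (x v : V) (t0 : R) :
  (forall h, f (h *: v + x) = P (h + t0)) ->
  (derivable f x v <-> derivable P t0 1) /\ 'D_v f x = 'D_1 P t0.
Proof.
move=> fP.
have fx : f x = P t0 by have := fP 0; rewrite scale0r !add0r.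
have quotientE : (fun h : R => h^-1 *: ((f \o shift x) (h *: v) - f x)) =
                 (fun h : R => h^-1 *: ((P \o shift t0) (h *: 1) - P t0)).
  by apply/funext => h /=; rewrite fP fx [h *: 1]mulr1.
by rewrite /derivable /derive quotientE.
Qed.

Definition monomial c e x : R := c * \prod_(j < m) x 0 j `^ e j.

Lemma shift_ecoordE (i : 'I_m) (h : R) x j :
  (h *: ecoord R i + x) 0 j = if j == i then h + x 0 j else x 0 j.
Proof.
rewrite /ecoord !mxE eqxx /=; case: eqP => [->|_]; first by rewrite mulr1.
by rewrite mulr0 add0r.
Qed.

Lemma monomial_shift_ecoord (i : 'I_m) c e x (h : R) :
  monomial c e (h *: ecoord R i + x) =
  (c * \prod_(j < m | j != i) x 0 j `^ e j) * (h + x 0 i) `^ e i.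
Proof.
rewrite /monomial (bigD1 i) //= shift_ecoordE eqxx mulrAC -mulrA.
by congr (_ * (_ * _)); apply: eq_bigr => j /negPf ji; rewrite shift_ecoordE ji.
Qed.

Lemma monomial_dpartial (i : 'I_m) c e x : (forall j, 0 < x 0 j) ->
  derivable (monomial c e) x (ecoord R i) /\
  dpartial i (monomial c e) x =
    monomial (c * e i) (fun j => e j - (j == i)%:R) x.
Proof.
move=> x_gt0; rewrite /dpartial; set K := c * \prod_(j < m | j != i) x 0 j `^ e j.
have [derivable_iff ->] :=
  @derive_along_line _ _ (fun t => K * t `^ e i) _ _ _
    (monomial_shift_ecoord i c e x).
have /(is_deriveZ K) D := is_derive1_powR (e i) (x_gt0 i).
split; first by apply/derivable_iff; case: D.
rewrite derive_val /monomial (bigD1 i) //= eqxx /K.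
rewrite [in RHS](eq_bigr (fun j => x 0 j `^ e j)) => [|j /negPf ->]; last first.
  by rewrite subr0.
have -> : true%:R = 1 :> R by [].
by change (?k *: ?v) with (k * v); ring.
Qed.

Lemma monomial_continuous c e x : (forall j, 0 < x 0 j) ->
  {for x, continuous (monomial c e)}.
Proof.
move=> x_gt0.
suff prod_cont r :
    {for x, continuous (fun y : 'rV[R]_m => \prod_(j <- r) y 0 j `^ e j)}.
  exact: cvgM (cvg_cst c) (prod_cont _).
elim: r => [|j r IH].
  rewrite (_ : (fun y => _) = cst 1); first exact: cst_continuous.
  by apply/funext => y; rewrite big_nil.
have coord_powR_cont : {for x, continuous (fun y : 'rV[R]_m => y 0 j `^ e j)}.
  have powR_cont : {for x 0 j, continuous (fun t : R => t `^ e j)}.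
    apply: differentiable_continuous; apply/derivable1_diffP.
    by case: (is_derive1_powR (e j) (x_gt0 j)).
  exact: (@continuous_comp _ _ _ (fun y : 'rV[R]_m => y 0 j) _ x
    (@coord_continuous R 1 m 0 j x) powR_cont).
rewrite (_ : (fun y => _) =
  fun y : 'rV[R]_m => y 0 j `^ e j * \prod_(k <- r) y 0 k `^ e k).
  exact: cvgM coord_powR_cont IH.
by apply/funext => y; rewrite big_cons.
Qed.

Lemma normr_monomial c e x : `|monomial c e x| = `|c| * monomial 1 e x.
Proof.
rewrite /monomial mul1r normrM [`|\prod_(_ < _) _|]ger0_norm //.
by apply: prodr_ge0 => j _; exact: powR_ge0.
Qed.

Lemma monomial_lower_exponents c e (nu : 'I_m -> nat) x :
  (forall j, 0 < x 0 j) ->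
  monomial c (fun j => e j - (nu j)%:R) x = monomial c e x / mpow x nu.
Proof.
move=> x_gt0; rewrite /monomial /mpow -mulrA -prodf_div; congr (_ * _).
apply: eq_bigr => j _; rewrite powRB ?powR_mulrn ?ltW //.
by apply/implyP => _; rewrite gt_eqF.
Qed.

Lemma mpow_gt0 x (nu : 'I_m -> nat) : (forall j, 0 < x 0 j) -> 0 < mpow x nu.
Proof. by move=> x_gt0; apply: prodr_gt0 => j _; exact: exprn_gt0. Qed.

Definition partial_exponent e s j : R := e j - (count_mem j s)%:R.

Fixpoint partial_coef c e s : R :=
  if s is i :: s' then partial_coef c e s' * partial_exponent e s' i else c.

Lemma partial_coef_le c e s (M : R) : 1 <= M -> (forall j, `|e j| <= M) ->
  `|partial_coef c e s| <= `|c| * M ^+ size s * (size s)`!%:R.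
Proof.
move=> M_ge1 eM; elim: s => [|i s IH] /=; first by rewrite expr0 !mulr1.
have exponent_le : `|partial_exponent e s i| <= M * (size s).+1%:R.
  apply: le_trans (ler_normB _ _) _; rewrite normr_nat -addn1 natrD.
  have : (count_mem i s)%:R <= (size s)%:R :> R by rewrite ler_nat count_size.
  have : 0 <= (size s)%:R * (M - 1) :> R by rewrite mulr_ge0 ?subr_ge0.
  by have := eM i; lra.
have -> : `|c| * M ^+ (size s).+1 * (size s).+1`!%:R =
          `|c| * M ^+ size s * (size s)`!%:R * (M * (size s).+1%:R).
  by rewrite factS natrM exprS; ring.
by rewrite normrM ler_pM.
Qed.

Definition mderiv_seq (nu : 'I_m -> nat) : seq 'I_m :=
  flatten [seq nseq (nu i) i | i <- enum 'I_m].

Lemma size_mderiv_seq nu : size (mderiv_seq nu) = mabs nu.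
Proof.
rewrite size_flatten /shape -map_comp sumnE big_map big_enum.
by apply: eq_bigr => i _; rewrite /= size_nseq.
Qed.

Lemma count_mderiv_seq nu j : count_mem j (mderiv_seq nu) = nu j.
Proof.
rewrite count_flatten -map_comp sumnE big_map big_enum (bigD1 j) //=.
rewrite count_nseq /= eqxx mul1n big1 ?addn0 // => i.
by rewrite count_nseq /= eq_sym => /negPf ->.
Qed.

Section OpenInOrthant.
Context {U : set 'rV[R]_m}.
Hypothesis openU : open U.
Hypothesis U_gt0 : forall {x}, U x -> forall j, 0 < x 0 j.

Let near_U x : U x -> \forall y \near x, U y.
Proof. by move=> Ux; apply: open_nbhs_nbhs. Qed.

Lemma dpartials_monomial c e s x : U x ->
  dpartials s (monomial c e) x =
    monomial (partial_coef c e s) (partial_exponent e s) x.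
Proof.
elim: s x => [|i s IH] x Ux /=.
  by congr (_ * _); apply: eq_bigr => j _; rewrite /partial_exponent subr0.
rewrite /dpartial (@near_eq_derive _ _ _ _
    (monomial (partial_coef c e s) (partial_exponent e s))) -/(dpartial i _ x).
  have [_ ->] := monomial_dpartial i (partial_coef c e s) (partial_exponent e s) x
    (U_gt0 Ux).
  congr monomial; apply/funext => j.
  by rewrite /partial_exponent /= natrD opprD addrA eq_sym addrAC.
by near=> y; apply: IH; near: y; exact: near_U.
Unshelve. all: by end_near.
Qed.

Lemma smooth_on_monomial c e : smooth_on U (monomial c e).
Proof.
move=> s x Ux.
have near_monomial : {near x, monomial (partial_coef c e s) (partial_exponent e s)
                              =1 dpartials s (monomial c e)}.
  by near=> y; rewrite dpartials_monomial //; near: y; exact: near_U.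
split.
  apply: cvg_trans (near_eq_cvg near_monomial) _.
  by rewrite dpartials_monomial //; exact: monomial_continuous (U_gt0 Ux).
move=> i; apply: (near_eq_derivable near_monomial).
by case: (monomial_dpartial i (partial_coef c e s) (partial_exponent e s) x
  (U_gt0 Ux)).
Unshelve. all: by end_near.
Qed.

Lemma mderiv_monomial_le c e (M : R) nu x :
  1 <= M -> (forall j, `|e j| <= M) -> U x ->
  `|mderiv nu (monomial c e) x| <=
    `|monomial c e x| * M ^+ mabs nu * (mabs nu)`!%:R / mpow x nu.
Proof.
move=> M_ge1 eM Ux; have x_gt0 := U_gt0 Ux.
have q_ge0 : 0 <= monomial 1 e x.
  by rewrite /monomial mul1r; apply: prodr_ge0 => j _; exact: powR_ge0.
have lowered : partial_exponent e (mderiv_seq nu) = fun j => e j - (nu j)%:R.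
  by apply/funext => j; rewrite /partial_exponent count_mderiv_seq.
rewrite /mderiv -/(mderiv_seq nu) dpartials_monomial // lowered.
rewrite monomial_lower_exponents // normrM normfV (gtr0_norm (mpow_gt0 _ _ x_gt0)).
rewrite !normr_monomial -size_mderiv_seq.
apply: ler_wpM2r; first by rewrite invr_ge0 ltW ?mpow_gt0.
rewrite !(mulrAC _ (monomial 1 e x)); apply: (ler_wpM2r q_ge0).
exact: partial_coef_le.
Qed.

End OpenInOrthant.
End Monomial.

Theorem mainTheorem6 (R : realType) (m : nat) (U : set 'rV[R]_m)
    (a : R) (mu : 'I_m -> R) :
  open U -> U `<=` @unit_cube R m ->
  let b := fun x : 'rV[R]_m => a * \prod_(i < m) (x 0 i) `^ (mu i) in
  (exists K : R, forall x, U x -> `|b x| <= K) ->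
  let M := Num.max 1 (\big[Num.max/0]_(i < m) `|mu i|) in
  let B := sup [set `|b x| | x in U] in
  weakly_mild U M B 0 b.
Proof.
move=> openU subU b [K bK] M B.
have U_gt0 x : U x -> forall j, 0 < x 0 j by move=> /subU Ux j; case/andP: (Ux j).
have M_ge1 : 1 <= M by rewrite le_max lexx.
have muM j : `|mu j| <= M.
  by rewrite le_max (le_bigmax _ (fun i => `|mu i|) j) orbT.
split; first exact: smooth_on_monomial.
move=> nu x Ux.
have bB : `|b x| <= B.
  by apply: ub_le_sup; [exists K => _ [y Uy <-]; exact: bK | exists x].
rewrite add0r !powRr1 ?(le_trans (normr_ge0 _) bB) //.
rewrite -[b]/(monomial a mu).
apply: le_trans (mderiv_monomial_le openU U_gt0 a mu M nu x M_ge1 muM Ux) _.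
have M_gt0 : 0 < M := lt_le_trans ltr01 M_ge1.
have mpow_pos := mpow_gt0 x nu (U_gt0 x Ux).
by rewrite !ler_pM2r ?invr_gt0 ?exprn_gt0 ?ltr0n ?fact_gt0.
Qed.
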